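(* Let $\{V_n:n\in\mathbb N\}$ be a family of pairwise disjoint countable subsets of the open square $(-1,1)^2$, and $\{W_n:n\in\mathbb N\}$ a family of pairwise disjoint subsets of $(-1,1)^2$, such that for each $n\in\mathbb N$ both $V_n$ and $W_n$ are dense in $[-1,1]^2$. Then for any $\lambda>1$ and any $\varepsilon>0$ there exists a $\lambda$-homeomorphism $h:[-1,1]^2\to[-1,1]^2$ such that $h|\partial [-1,1]^2=\mathrm{id}$, $d(h(x),x)<\varepsilon$ for every $x\in[-1,1]^2$, and $h(V_n)\subset W_n$ for every $n\in\mathbb N$.
   Context: $d$ is the Euclidean metric and $\partial[-1,1]^2$ is the boundary of the square. For $\lambda\ge1$, a bijection $h:X\to Y$ between metric spaces $(X,d)$, $(Y,\rho)$ is a $\lambda$-homeomorphism if $d(x,y)/\lambda\le \rho(h(x),h(y))\le\lambda d(x,y)$ for all $x,y\in X$. *)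

From Stdlib Require Import Reals.
Open Scope R_scope.

Definition pt := (R * R)%type.

Definition dist2 (p q : pt) : R :=
  sqrt ((fst p - fst q)^2 + (snd p - snd q)^2).

Definition closed_sq (p : pt) : Prop :=
  -1 <= fst p <= 1 /\ -1 <= snd p <= 1.
Definition open_sq (p : pt) : Prop :=
  -1 < fst p < 1 /\ -1 < snd p < 1.
Definition bd_sq (p : pt) : Prop := closed_sq p /\ ~ open_sq p.

Definition countable_set (A : pt -> Prop) : Prop :=
  exists f : pt -> nat, forall x y, A x -> A y -> f x = f y -> x = y.

Definition dense_in_sq (A : pt -> Prop) : Prop :=
  forall p, closed_sq p -> forall r, 0 < r -> exists a, A a /\ dist2 a p < r.

Definition pairwise_disjoint (F : nat -> pt -> Prop) : Prop :=
  forall n m, n <> m -> forall x, F n x -> F m x -> False.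

Definition lambda_homeo_sq (lam : R) (h : pt -> pt) : Prop :=
  (forall x, closed_sq x -> closed_sq (h x)) /\
  (forall x y, closed_sq x -> closed_sq y -> h x = h y -> x = y) /\
  (forall y, closed_sq y -> exists x, closed_sq x /\ h x = y) /\
  (forall x y, closed_sq x -> closed_sq y ->
     dist2 x y / lam <= dist2 (h x) (h y) /\ dist2 (h x) (h y) <= lam * dist2 x y).

From Stdlib Require Import Reals Lra Lia Rgeom Cantor ClassicalEpsilon.
From Coquelicot Require Import Coquelicot.
Open Scope R_scope.

(* The map is h = id + g, where g is a sum of tent-shaped bumps, one for each
   point v of the union of the V n (enumerated without repetition).  The k-th
   bump is supported in a sup-norm ball around v_k that stays away from the
   boundary and from all earlier points v_j, and its height is at most
   2^-(k+1) times both eps/4 and q times its radius.  Hence g is q-Lipschitz for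
   the sup norm, small, and zero on the boundary, and h(v_k) only depends on
   the first k+1 bumps; the height of the k-th bump is chosen to move h(v_k)
   into the dense set W n.  A perturbation of the identity by a q-Lipschitz map
   with 2q <= 1 - 1/lam is a lam-homeomorphism: the distortion bounds follow
   from the triangle inequality, and surjectivity from the contraction
   principle. *)

Definition padd (u w : pt) : pt := (fst u + fst w, snd u + snd w).
Definition psub (u w : pt) : pt := (fst u - fst w, snd u - snd w).
Definition pscal (a : R) (u : pt) : pt := (a * fst u, a * snd u).
Definition nrm (u : pt) : R := Rmax (Rabs (fst u)) (Rabs (snd u)).
Definition supn (x y : pt) : R := nrm (psub x y).

Lemma nrm_fst u : Rabs (fst u) <= nrm u.
Proof. apply Rmax_l. Qed.

Lemma nrm_snd u : Rabs (snd u) <= nrm u.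
Proof. apply Rmax_r. Qed.

Lemma nrm_ge0 u : 0 <= nrm u.
Proof. eapply Rle_trans; [apply Rabs_pos | apply nrm_fst]. Qed.

Lemma nrm_le u M : Rabs (fst u) <= M -> Rabs (snd u) <= M -> nrm u <= M.
Proof. apply Rmax_lub. Qed.

Lemma nrm_eq0 u : nrm u = 0 -> u = (0, 0).
Proof.
  intros H; destruct u as [a b].
  pose proof (nrm_fst (a, b)); pose proof (nrm_snd (a, b)); simpl in *.
  f_equal; apply Rabs_eq_0; apply Rle_antisym; try apply Rabs_pos; congruence.
Qed.

Lemma nrm_triang u w : nrm (padd u w) <= nrm u + nrm w.
Proof.
  apply nrm_le; simpl; eapply Rle_trans; try apply Rabs_triang;
    apply Rplus_le_compat; auto using nrm_fst, nrm_snd.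
Qed.

Lemma nrm_scal a u : nrm (pscal a u) = Rabs a * nrm u.
Proof.
  unfold nrm; simpl; rewrite !Rabs_mult. apply RmaxRmult, Rabs_pos.
Qed.

Lemma supn_sym x y : supn x y = supn y x.
Proof.
  unfold supn, nrm; simpl. now rewrite (Rabs_minus_sym (fst x)), (Rabs_minus_sym (snd x)).
Qed.

Lemma supn_refl x : supn x x = 0.
Proof.
  unfold supn, nrm, psub; simpl; rewrite !Rminus_diag, Rabs_R0; apply Rmax_left; lra.
Qed.

Lemma supn_triang x y z : supn x z <= supn x y + supn y z.
Proof.
  unfold supn. replace (psub x z) with (padd (psub x y) (psub y z)).
  - apply nrm_triang.
  - unfold padd, psub; simpl; f_equal; ring.
Qed.

Lemma supn_eq0 x y : supn x y = 0 -> x = y.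
Proof.
  intros H; apply nrm_eq0 in H; destruct x, y; unfold psub in H; simpl in H.
  injection H; intros; f_equal; lra.
Qed.

Lemma supn_pscal a b u : supn (pscal a u) (pscal b u) = Rabs (a - b) * nrm u.
Proof.
  rewrite <- nrm_scal; unfold supn; f_equal; unfold psub, pscal; simpl; f_equal; ring.
Qed.

Lemma pscal_0_l u : pscal 0 u = (0, 0).
Proof. unfold pscal; f_equal; ring. Qed.

Lemma pscal_0_r a : pscal a (0, 0) = (0, 0).
Proof. unfold pscal; simpl; f_equal; ring. Qed.

Lemma supn_le_dist2 x y : supn x y <= dist2 x y.
Proof. apply sqrt_plus_sqr. Qed.

Lemma dist2_le_2supn x y : dist2 x y <= 2 * supn x y.
Proof.
  eapply Rle_trans; [apply sqrt_plus_sqr |].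
  apply Rmult_le_compat_r; [apply nrm_ge0 |].
  left; apply sqrt_less_alt; lra.
Qed.

Lemma dist2_triang x y z : dist2 x z <= dist2 x y + dist2 y z.
Proof.
  assert (E : forall p q, dist2 p q = dist_euc (fst p) (snd p) (fst q) (snd q)).
  { intros; unfold dist2, dist_euc; now rewrite !Rsqr_pow2. }
  rewrite !E. apply triangle.
Qed.

Lemma dist2_padd_l x u w : dist2 (padd x u) (padd x w) = dist2 u w.
Proof. unfold dist2; simpl; f_equal; ring. Qed.

Lemma dist2_padd_r x y u : dist2 (padd x u) (padd y u) = dist2 x y.
Proof. unfold dist2; simpl; f_equal; ring. Qed.

Lemma dist2_refl x : dist2 x x = 0.
Proof.
  unfold dist2; rewrite !Rminus_diag; replace (0 ^ 2 + 0 ^ 2) with 0 by ring; apply sqrt_0.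
Qed.

Lemma dist2_sym x y : dist2 x y = dist2 y x.
Proof. unfold dist2; f_equal; ring. Qed.

Lemma dist2_eq0 x y : dist2 x y = 0 -> x = y.
Proof.
  intros H; apply supn_eq0, Rle_antisym; [rewrite <- H; apply supn_le_dist2 | apply nrm_ge0].
Qed.

Definition bd_dist (x : pt) : R := Rmin (1 - Rabs (fst x)) (1 - Rabs (snd x)).

Lemma bd_dist_origin : bd_dist (0, 0) = 1.
Proof. unfold bd_dist; simpl; rewrite Rabs_R0, Rminus_0_r; apply Rmin_left; lra. Qed.

Lemma bd_dist_pos x : open_sq x -> 0 < bd_dist x.
Proof.
  intros [H1 H2].
  assert (Rabs (fst x) < 1) by (apply Rabs_def1; lra).
  assert (Rabs (snd x) < 1) by (apply Rabs_def1; lra).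
  apply Rmin_glb_lt; lra.
Qed.

Lemma bd_dist_lip x y : bd_dist y - supn x y <= bd_dist x.
Proof.
  unfold bd_dist, supn.
  pose proof (nrm_fst (psub x y)); pose proof (nrm_snd (psub x y)); simpl in *.
  pose proof (Rabs_triang_inv (fst x) (fst y)); pose proof (Rabs_triang_inv (snd x) (snd y)).
  pose proof (Rmin_l (1 - Rabs (fst y)) (1 - Rabs (snd y))).
  pose proof (Rmin_r (1 - Rabs (fst y)) (1 - Rabs (snd y))).
  apply Rmin_glb; lra.
Qed.

Lemma bd_dist_le_supn x y : ~ open_sq x -> bd_dist y <= supn x y.
Proof.
  intros Hx; unfold bd_dist, supn.
  pose proof (nrm_fst (psub x y)); pose proof (nrm_snd (psub x y)); simpl in *.
  pose proof (Rabs_triang_inv (fst x) (fst y)); pose proof (Rabs_triang_inv (snd x) (snd y)).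
  pose proof (Rmin_l (1 - Rabs (fst y)) (1 - Rabs (snd y))).
  pose proof (Rmin_r (1 - Rabs (fst y)) (1 - Rabs (snd y))).
  destruct (Rlt_dec (Rabs (fst x)) 1) as [H5 | H5]; [|lra].
  destruct (Rlt_dec (Rabs (snd x)) 1) as [H6 | H6]; [|lra].
  apply Rabs_def2 in H5, H6; exfalso; apply Hx; split; lra.
Qed.

Lemma open_closed_sq x : open_sq x -> closed_sq x.
Proof. intros [H1 H2]; split; lra. Qed.

Lemma closed_sq_padd x u : open_sq x -> nrm u <= bd_dist x -> closed_sq (padd x u).
Proof.
  intros _ Hu; unfold bd_dist in Hu.
  pose proof (nrm_fst u); pose proof (nrm_snd u).
  pose proof (Rmin_l (1 - Rabs (fst x)) (1 - Rabs (snd x))).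
  pose proof (Rmin_r (1 - Rabs (fst x)) (1 - Rabs (snd x))).
  pose proof (Rabs_triang (fst x) (fst u)); pose proof (Rabs_triang (snd x) (snd u)).
  split; apply Rcomplements.Rabs_le_between; simpl; lra.
Qed.
Lemma Series_finite (a : nat -> R) k :
  (forall j, (k < j)%nat -> a j = 0) -> Series a = sum_n a k.
Proof.
  intros H; apply is_series_unique; change (is_lim_seq (sum_n a) (sum_n a k)).
  apply (is_lim_seq_ext_loc (fun _ => sum_n a k)); [| apply is_lim_seq_const].
  exists k; intros n Hn; induction Hn as [| n Hn IH]; [reflexivity |].
  rewrite sum_Sn, <- IH, H by lia; symmetry; apply Rplus_0_r.
Qed.

Lemma Series_geom_bound (a : nat -> R) M :
  (forall k, Rabs (a k) <= M * (/ 2) ^ S k) -> ex_series a /\ Rabs (Series a) <= M.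
Proof.
  intros Ha.
  assert (HM : 0 <= M) by (pose proof (Ha O); pose proof (Rabs_pos (a O)); simpl in *; lra).
  assert (Hgeom : is_series (fun k => M * (/ 2) ^ S k) M).
  { pose proof (is_series_geom (/ 2) ltac:(rewrite Rabs_pos_eq; lra)) as Hg.
    apply (is_series_scal_l (M * / 2)) in Hg.
    unfold scal in Hg; simpl in Hg; unfold mult in Hg; simpl in Hg.
    replace (M * / 2 * / (1 - / 2)) with M in Hg by field.
    eapply is_series_ext; [| exact Hg]; intros n; simpl; ring. }
  assert (Habs : ex_series (fun k => Rabs (a k))).
  { apply (@ex_series_le R_AbsRing R_CompleteNormedModule _ (fun k => M * (/ 2) ^ S k)).
    - intros n; unfold norm; simpl; unfold abs; simpl; rewrite Rabs_Rabsolu; apply Ha.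
    - eexists; exact Hgeom. }
  split; [now apply ex_series_Rabs |].
  eapply Rle_trans; [now apply Series_Rabs |].
  rewrite <- (is_series_unique _ _ Hgeom).
  apply Series_le; [intros n; split; [apply Rabs_pos | apply Ha] | eexists; exact Hgeom].
Qed.

Definition pseries (u : nat -> pt) : pt :=
  (Series (fun k => fst (u k)), Series (fun k => snd (u k))).

Fixpoint psum (u : nat -> pt) (k : nat) : pt :=
  match k with O => (0, 0) | S j => padd (psum u j) (u j) end.

Lemma pseries_bound u M :
  (forall k, nrm (u k) <= M * (/ 2) ^ S k) -> nrm (pseries u) <= M.
Proof.
  intros Hu; apply nrm_le; apply Series_geom_bound; intros k.
  - eapply Rle_trans; [apply nrm_fst | apply Hu].
  - eapply Rle_trans; [apply nrm_snd | apply Hu].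
Qed.

Lemma pseries_supn u w M L :
  (forall k, nrm (u k) <= M * (/ 2) ^ S k) -> (forall k, nrm (w k) <= M * (/ 2) ^ S k) ->
  (forall k, supn (u k) (w k) <= L * (/ 2) ^ S k) -> supn (pseries u) (pseries w) <= L.
Proof.
  intros Hu Hw Huw.
  assert (Hex : forall (pi : pt -> R) (v : nat -> pt), (forall p, Rabs (pi p) <= nrm p) ->
            (forall k, nrm (v k) <= M * (/ 2) ^ S k) -> ex_series (fun k => pi (v k))).
  { intros pi v Hpi Hv; apply (Series_geom_bound _ M); intros k;
      eapply Rle_trans; [apply Hpi | apply Hv]. }
  unfold supn at 1, pseries, psub; apply nrm_le; simpl.
  - rewrite <- Series_minus by (apply Hex; auto using nrm_fst).
    apply Series_geom_bound; intros k.
    eapply Rle_trans; [apply (nrm_fst (psub (u k) (w k))) | apply Huw].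
  - rewrite <- Series_minus by (apply Hex; auto using nrm_snd).
    apply Series_geom_bound; intros k.
    eapply Rle_trans; [apply (nrm_snd (psub (u k) (w k))) | apply Huw].
Qed.

Lemma psum_bound u M k :
  (forall j, nrm (u j) <= M * (/ 2) ^ S j) -> nrm (psum u k) <= M.
Proof.
  intros Hu.
  assert (Hk : nrm (psum u k) <= M * (1 - (/ 2) ^ k)).
  { induction k as [| k IH]; simpl.
    - unfold nrm; simpl; rewrite Rabs_R0, Rmax_left; lra.
    - eapply Rle_trans; [apply nrm_triang |].
      specialize (Hu k); simpl in Hu; nra. }
  assert (0 <= M * (/ 2) ^ k)
    by (pose proof (Hu k); pose proof (nrm_ge0 (u k)); simpl in *; lra).
  lra.
Qed.

Lemma pseries_finite u k :
  (forall j, (k < j)%nat -> u j = (0, 0)) -> pseries u = psum u (S k).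
Proof.
  intros Hu.
  assert (Hsum : forall pi : pt -> R, pi (0, 0) = 0 ->
            (forall p q, pi (padd p q) = pi p + pi q) ->
            forall n, sum_n (fun j => pi (u j)) n = pi (psum u (S n))).
  { intros pi H0 Hadd n; induction n as [| n IH]; cbn [psum].
    - rewrite sum_O, Hadd, H0; symmetry; apply Rplus_0_l.
    - rewrite sum_Sn, IH, (Hadd _ (u (S n))); reflexivity. }
  unfold pseries; rewrite (surjective_pairing (psum u (S k))).
  rewrite !(Series_finite _ k) by (intros j Hj; now rewrite Hu).
  f_equal; apply Hsum; reflexivity.
Qed.

Lemma pt_complete (s : nat -> pt) :
  (forall eps, 0 < eps -> exists N, forall n m, (N <= n)%nat -> (N <= m)%nat ->
     supn (s n) (s m) < eps) ->
  exists l, forall eps, 0 < eps -> exists N, forall n, (N <= n)%nat -> supn (s n) l < eps.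
Proof.
  intros Hs.
  assert (Hcoord : forall pi : pt -> R, (forall x y, Rabs (pi x - pi y) <= supn x y) ->
            {l | Un_cv (fun n => pi (s n)) l}).
  { intros pi Hpi; apply Rcomplete.R_complete; intros eps Heps.
    destruct (Hs eps Heps) as [N HN]; exists N; intros n m Hn Hm.
    eapply Rle_lt_trans; [apply Hpi | now apply HN]. }
  destruct (Hcoord fst) as [l1 Hl1]; [intros; apply (nrm_fst (psub x y)) |].
  destruct (Hcoord snd) as [l2 Hl2]; [intros; apply (nrm_snd (psub x y)) |].
  exists (l1, l2); intros eps Heps.
  destruct (Hl1 eps Heps) as [N1 HN1], (Hl2 eps Heps) as [N2 HN2].
  exists (max N1 N2); intros n Hn; apply Rmax_lub_lt; [apply HN1 | apply HN2]; lia.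
Qed.

Lemma contraction_orbit_bound (T : pt -> pt) q x0 n m :
  0 <= q < 1 -> (forall x y, supn (T x) (T y) <= q * supn x y) -> (n <= m)%nat ->
  (1 - q) * supn (Nat.iter m T x0) (Nat.iter n T x0) <= supn (T x0) x0 * q ^ n.
Proof.
  intros Hq HT Hnm.
  set (s n := Nat.iter n T x0).
  set (D := supn (s 1%nat) (s 0%nat)).
  assert (Hstep : forall i, supn (s (S i)) (s i) <= D * q ^ i).
  { induction i as [| i IH]; [rewrite pow_O, Rmult_1_r; apply Rle_refl |].
    change (supn (T (s (S i))) (T (s i)) <= D * q ^ S i).
    eapply Rle_trans; [apply HT |]; cbn [pow].
    pose proof (Rmult_le_compat_l q _ _ (proj1 Hq) IH); lra. }
  assert (Hdrift : forall i j, (1 - q) * supn (s (i + j)%nat) (s i) <= D * (q ^ i - q ^ (i + j))).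
  { intros i j; induction j as [| j IH].
    - rewrite Nat.add_0_r, supn_refl; lra.
    - pose proof (supn_triang (s (i + S j)%nat) (s (i + j)%nat) (s i)).
      pose proof (Hstep (i + j)%nat).
      replace (i + S j)%nat with (S (i + j)) in * by lia; simpl pow in *; nra. }
  replace m with (n + (m - n))%nat by lia.
  eapply Rle_trans; [apply Hdrift |]; pose proof (pow_le q (n + (m - n)) (proj1 Hq)).
  assert (0 <= D) by apply nrm_ge0.
  change (supn (T x0) x0) with D; nra.
Qed.

Lemma contraction_fixpoint (T : pt -> pt) q :
  0 <= q < 1 -> (forall x y, supn (T x) (T y) <= q * supn x y) -> exists z, T z = z.
Proof.
  intros Hq HT.
  set (s n := Nat.iter n T (0, 0)).
  set (D := supn (T (0, 0)) (0, 0)).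
  assert (HD : 0 <= D) by apply nrm_ge0.
  assert (Hcauchy : forall n m, (n <= m)%nat -> (1 - q) * supn (s m) (s n) <= D * q ^ n)
    by (intros; now apply contraction_orbit_bound).
  destruct (pt_complete s) as [l Hl].
  { intros eps Heps.
    destruct (pow_lt_1_zero q ltac:(rewrite Rabs_pos_eq; lra) (eps * (1 - q) / (D + 1)))
      as [N HN]; [apply Rdiv_lt_0_compat; nra |].
    assert (Hsmall : forall n m, (N <= n)%nat -> (n <= m)%nat -> supn (s m) (s n) < eps).
    { intros n m Hn Hnm; specialize (HN n Hn); rewrite Rabs_pos_eq in HN by (apply pow_le; lra).
      pose proof (Hcauchy n m Hnm); pose proof (nrm_ge0 (psub (s m) (s n))).
      apply Rmult_lt_compat_l with (r := D + 1) in HN; [| lra].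
      replace ((D + 1) * (eps * (1 - q) / (D + 1))) with (eps * (1 - q)) in HN by (field; lra).
      pose proof (pow_le q n (proj1 Hq)); unfold supn in *; nra. }
    exists N; intros n m Hn Hm; destruct (Nat.le_ge_cases n m).
    - rewrite supn_sym; now apply Hsmall.
    - now apply Hsmall. }
  exists l; apply supn_eq0, Rle_antisym; [| apply nrm_ge0].
  apply Rnot_lt_le; intros Hpos.
  destruct (Hl (supn (T l) l / 2)) as [N HN]; [lra |].
  pose proof (HN N (le_n _)); pose proof (HN (S N) (Nat.le_succ_diag_r _)).
  pose proof (supn_triang (T l) (s (S N)) l); pose proof (HT l (s N)).
  rewrite (supn_sym l) in *; simpl in *; nra.
Qed.

Lemma dist2_perturb g q x y :
  0 <= q -> (forall x y, supn (g x) (g y) <= q * supn x y) ->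
  Rabs (dist2 (padd x (g x)) (padd y (g y)) - dist2 x y) <= 2 * q * dist2 x y.
Proof.
  intros Hq Hg.
  assert (Hgd : dist2 (g x) (g y) <= 2 * q * dist2 x y).
  { eapply Rle_trans; [apply dist2_le_2supn |].
    pose proof (Hg x y); pose proof (supn_le_dist2 x y); nra. }
  pose proof (dist2_triang (padd x (g x)) (padd x (g y)) (padd y (g y))).
  pose proof (dist2_triang (padd x (g y)) (padd x (g x)) (padd y (g y))).
  rewrite (dist2_sym (padd x (g y)) (padd x (g x))), !dist2_padd_l, dist2_padd_r in *.
  apply Rabs_le; lra.
Qed.

Lemma perturbation_lambda_homeo (g : pt -> pt) q lam :
  1 < lam -> 0 <= q -> 2 * q <= 1 - / lam ->
  (forall x y, supn (g x) (g y) <= q * supn x y) ->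
  (forall x, ~ open_sq x -> g x = (0, 0)) ->
  (forall x, open_sq x -> nrm (g x) <= bd_dist x) ->
  lambda_homeo_sq lam (fun x => padd x (g x)).
Proof.
  intros Hlam Hq Hql Hg Hout Hin.
  assert (Hil : 0 < / lam) by (apply Rinv_0_lt_compat; lra).
  assert (Hfix : forall x, ~ open_sq x -> padd x (g x) = x).
  { intros x Hx; rewrite Hout by assumption; destruct x; unfold padd; simpl; f_equal; ring. }
  assert (Hbilip : forall x y, dist2 x y / lam <= dist2 (padd x (g x)) (padd y (g y)) /\
                               dist2 (padd x (g x)) (padd y (g y)) <= lam * dist2 x y).
  { intros x y; pose proof (dist2_perturb g q x y Hq Hg) as Hp; apply Rabs_le_between' in Hp.
    pose proof (sqrt_pos ((fst x - fst y) ^ 2 + (snd x - snd y) ^ 2)); fold (dist2 x y) in *.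
    assert (lam * / lam = 1) by (field; lra).
    unfold Rdiv; split; nra. }
  split; [| split; [| split]].
  - intros x Hx; destruct (classic (open_sq x)) as [Ho | Ho].
    + now apply closed_sq_padd, Hin.
    + now rewrite Hfix.
  - intros x y _ _ Hxy; apply dist2_eq0.
    destruct (Hbilip x y) as [Hlow _]; rewrite Hxy, dist2_refl in Hlow.
    pose proof (sqrt_pos ((fst x - fst y) ^ 2 + (snd x - snd y) ^ 2)); fold (dist2 x y) in *.
    apply Rle_antisym; [| assumption].
    unfold Rdiv in Hlow; nra.
  - intros y Hy.
    destruct (contraction_fixpoint (fun z => psub y (g z)) q) as [z Hz]; [lra | |].
    { intros a b; unfold supn at 1.
      replace (psub (psub y (g a)) (psub y (g b))) with (psub (g b) (g a))
        by (unfold psub; simpl; f_equal; ring).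
      rewrite supn_sym; apply Hg. }
    assert (Hhz : padd z (g z) = y).
    { rewrite <- Hz at 1; destruct y; unfold padd, psub; simpl; f_equal; ring. }
    exists z; split; [| assumption].
    destruct (classic (open_sq z)) as [Ho | Ho]; [now apply open_closed_sq |].
    rewrite Hfix in Hhz by assumption; now subst.
  - intros x y _ _; apply Hbilip.
Qed.

Definition tent (c : pt) (r : R) (x : pt) : R := Rmax 0 (1 - supn x c / r).

Lemma tent_range c r x : 0 < r -> 0 <= tent c r x <= 1.
Proof.
  intros Hr; unfold tent; split; [apply Rmax_l |]; apply Rmax_lub; [lra |].
  assert (0 <= supn x c / r) by (apply Rdiv_le_0_compat; [apply nrm_ge0 | lra]); lra.
Qed.

Lemma tent_far c r x : 0 < r -> r <= supn x c -> tent c r x = 0.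
Proof.
  intros Hr H; unfold tent; apply Rmax_left.
  assert (1 <= supn x c / r) by (apply Rcomplements.Rle_div_r; lra); lra.
Qed.

Lemma tent_center c r : tent c r c = 1.
Proof. unfold tent; rewrite supn_refl, Rdiv_0_l, Rminus_0_r; apply Rmax_right; lra. Qed.

Lemma tent_lip c r x y : 0 < r -> Rabs (tent c r x - tent c r y) <= supn x y / r.
Proof.
  intros Hr.
  assert (Hmax : forall a b, Rabs (Rmax 0 a - Rmax 0 b) <= Rabs (a - b)).
  { intros a b; unfold Rmax; repeat destruct Rle_dec; unfold Rabs; repeat destruct Rcase_abs; lra. }
  unfold tent; eapply Rle_trans; [apply Hmax |].
  replace (1 - supn x c / r - (1 - supn y c / r)) with ((supn y c - supn x c) / r) by (field; lra).
  rewrite Rabs_div, (Rabs_pos_eq r) by lra.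
  apply Rmult_le_compat_r; [left; apply Rinv_0_lt_compat; lra |].
  pose proof (supn_triang y x c); pose proof (supn_triang x y c); rewrite (supn_sym y x) in *.
  apply Rabs_le; lra.
Qed.

Section Bumps.

Variables (c : nat -> pt) (r : nat -> R) (d : nat -> pt) (q e : R).
Hypothesis r_pos : forall k, 0 < r k.
Hypothesis r_le_bd_dist : forall k, r k <= bd_dist (c k) / 2.
Hypothesis d_le_r : forall k, nrm (d k) <= (/ 2) ^ S k * (q * r k).
Hypothesis d_le_e : forall k, nrm (d k) <= (/ 2) ^ S k * e.
Hypothesis q_le1 : q <= 1.

Definition bump (k : nat) (x : pt) : pt := pscal (tent (c k) (r k) x) (d k).

Definition bumps (x : pt) : pt := pseries (fun k => bump k x).

Lemma nrm_bump_le k x : nrm (bump k x) <= nrm (d k).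
Proof.
  unfold bump; rewrite nrm_scal; pose proof (tent_range (c k) (r k) x (r_pos k)).
  rewrite Rabs_pos_eq by lra; pose proof (nrm_ge0 (d k)); nra.
Qed.

Lemma bump_small k x : nrm (bump k x) <= e * (/ 2) ^ S k.
Proof. rewrite Rmult_comm; eapply Rle_trans; [apply nrm_bump_le | apply d_le_e]. Qed.

Lemma bump_supn k x y : supn (bump k x) (bump k y) <= q * supn x y * (/ 2) ^ S k.
Proof.
  unfold bump; rewrite supn_pscal.
  pose proof (tent_lip (c k) (r k) x y (r_pos k)); pose proof (d_le_r k).
  pose proof (nrm_ge0 (d k)); pose proof (r_pos k).
  eapply Rle_trans;
    [apply Rmult_le_compat; [apply Rabs_pos | apply nrm_ge0 | eassumption | eassumption] |].
  apply Req_le; field; lra.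
Qed.

Lemma bump_out k x : ~ open_sq x -> bump k x = (0, 0).
Proof.
  intros Hx; unfold bump; rewrite tent_far; [| apply r_pos |].
  - apply pscal_0_l.
  - pose proof (bd_dist_le_supn x (c k) Hx); pose proof (r_le_bd_dist k); pose proof (r_pos k); lra.
Qed.

Lemma bump_bd_dist k x : open_sq x -> nrm (bump k x) <= bd_dist x * (/ 2) ^ S k.
Proof.
  intros Hx; pose proof (bd_dist_pos x Hx); pose proof (pow_lt (/ 2) (S k) ltac:(lra)).
  destruct (Rle_dec (r k) (supn x (c k))) as [Hfar | Hnear].
  - unfold bump; rewrite tent_far, nrm_scal, Rabs_R0 by auto; nra.
  - assert (r k <= bd_dist x).
    { pose proof (bd_dist_lip x (c k)); pose proof (r_le_bd_dist k); lra. }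
    eapply Rle_trans; [apply nrm_bump_le |]; eapply Rle_trans; [apply d_le_r |].
    pose proof (r_pos k); rewrite Rmult_comm; apply Rmult_le_compat_r; nra.
Qed.

Lemma bumps_supn x y : supn (bumps x) (bumps y) <= q * supn x y.
Proof. apply (pseries_supn _ _ e); auto using bump_small, bump_supn. Qed.

Lemma bumps_small x : nrm (bumps x) <= e.
Proof. apply pseries_bound; intros k; apply bump_small. Qed.

Lemma bumps_out x : ~ open_sq x -> bumps x = (0, 0).
Proof.
  intros Hx; apply nrm_eq0, Rle_antisym; [| apply nrm_ge0].
  apply pseries_bound; intros k; rewrite bump_out by assumption.
  unfold nrm; simpl; rewrite Rabs_R0, Rmax_left; lra.
Qed.

Lemma bumps_bd_dist x : open_sq x -> nrm (bumps x) <= bd_dist x.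
Proof. intros Hx; apply pseries_bound; auto using bump_bd_dist. Qed.

End Bumps.

Definition nudge (A : pt -> Prop) (p : pt) (s : R) : pt :=
  match excluded_middle_informative (exists w, A w /\ supn w p <= s) with
  | left H => proj1_sig (constructive_indefinite_description _ H)
  | right _ => p
  end.

Lemma nudge_near A p s : 0 <= s -> supn (nudge A p s) p <= s.
Proof.
  intros Hs; unfold nudge; destruct excluded_middle_informative as [H | _].
  - apply (proj2_sig (constructive_indefinite_description _ H)).
  - now rewrite supn_refl.
Qed.

Lemma nudge_in A p s : (exists w, A w /\ supn w p <= s) -> A (nudge A p s).
Proof.
  intros Hex; unfold nudge; destruct excluded_middle_informative as [H | H]; [| contradiction].
  apply (proj2_sig (constructive_indefinite_description _ H)).
Qed.

Section Interpolation.

(* [slot k = Some (v, n)]: the k-th enumerated point is v, to be sent into W n. *)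
Variable slot : nat -> option (pt * nat).
Variable W : nat -> pt -> Prop.
Variables q e : R.
Hypothesis slot_open : forall k v n, slot k = Some (v, n) -> open_sq v.
Hypothesis slot_inj : forall j k v n m, slot j = Some (v, n) -> slot k = Some (v, m) -> j = k.
Hypothesis q_bounds : 0 < q <= 1.
Hypothesis e_pos : 0 < e.

Definition cen (k : nat) : pt := match slot k with Some (v, _) => v | None => (0, 0) end.

Fixpoint sep_before (v : pt) (k : nat) : R :=
  match k with
  | O => 1
  | S j => Rmin (sep_before v j) (match slot j with Some (w, _) => supn v w | None => 1 end)
  end.

(* Below the distance to every earlier point, so that later bumps vanish there. *)
Definition rad (k : nat) : R :=
  match slot k with Some (v, _) => Rmin (bd_dist v / 2) (sep_before v k) | None => / 2 end.

Definition step (k : nat) : R := (/ 2) ^ S k * Rmin (q * rad k) e.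

(* Given the sum f of the earlier bumps, the k-th displacement moves v + f v onto
   a nearby point of W n. *)
Definition disp_of (k : nat) (f : pt -> pt) : pt :=
  match slot k with
  | Some (v, n) => let p := padd v (f v) in psub (nudge (W n) p (step k)) p
  | None => (0, 0)
  end.

Fixpoint partial (k : nat) : pt -> pt :=
  match k with
  | O => fun _ => (0, 0)
  | S j => fun x => padd (partial j x) (pscal (tent (cen j) (rad j) x) (disp_of j (partial j)))
  end.

Definition disp (k : nat) : pt := disp_of k (partial k).

Lemma partial_psum k x : partial k x = psum (fun j => bump cen rad disp j x) k.
Proof. induction k as [| k IH]; [reflexivity |]; cbn [partial psum]; now rewrite IH. Qed.

Lemma sep_before_pos v k : (forall j n, (j < k)%nat -> slot j <> Some (v, n)) -> 0 < sep_before v k.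
Proof.
  induction k as [| k IH]; intros Hv; cbn [sep_before]; [lra |].
  apply Rmin_glb_lt; [apply IH; intros j n Hj; apply Hv; lia |].
  destruct (slot k) as [[w m] |] eqn:Hk; [| lra].
  destruct (nrm_ge0 (psub v w)) as [Hpos | Hzero]; [assumption |].
  symmetry in Hzero; apply supn_eq0 in Hzero; subst w.
  exfalso; apply (Hv k m); [lia | assumption].
Qed.

Lemma sep_before_le v k j w m : (j < k)%nat -> slot j = Some (w, m) -> sep_before v k <= supn v w.
Proof.
  induction k as [| k IH]; intros Hj Hs; [lia |]; cbn [sep_before].
  destruct (Nat.eq_dec j k) as [-> | Hne].
  - rewrite Hs; apply Rmin_r.
  - eapply Rle_trans; [apply Rmin_l | apply IH; [lia | assumption]].
Qed.

Lemma rad_pos k : 0 < rad k.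
Proof.
  unfold rad; destruct (slot k) as [[v n] |] eqn:Hk; [| lra].
  apply Rmin_glb_lt; [pose proof (bd_dist_pos v (slot_open _ _ _ Hk)); lra |].
  apply sep_before_pos; intros j m Hj Hs; pose proof (slot_inj _ _ _ _ _ Hs Hk); lia.
Qed.

Lemma rad_le_bd_dist k : rad k <= bd_dist (cen k) / 2.
Proof.
  unfold rad, cen; destruct (slot k) as [[v n] |]; [apply Rmin_l | rewrite bd_dist_origin; lra].
Qed.

Lemma step_pos k : 0 < step k.
Proof.
  unfold step; apply Rmult_lt_0_compat; [apply pow_lt; lra |].
  apply Rmin_glb_lt; [pose proof (rad_pos k); nra | lra].
Qed.

Lemma disp_le_step k : nrm (disp k) <= step k.
Proof.
  pose proof (step_pos k).
  unfold disp, disp_of; destruct (slot k) as [[v n] |].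
  - apply nudge_near; lra.
  - unfold nrm; simpl; rewrite Rabs_R0, Rmax_left; lra.
Qed.

Lemma disp_le_rad k : nrm (disp k) <= (/ 2) ^ S k * (q * rad k).
Proof.
  eapply Rle_trans; [apply disp_le_step |].
  apply Rmult_le_compat_l; [apply pow_le; lra | apply Rmin_l].
Qed.

Lemma disp_le_e k : nrm (disp k) <= (/ 2) ^ S k * e.
Proof.
  eapply Rle_trans; [apply disp_le_step |].
  apply Rmult_le_compat_l; [apply pow_le; lra | apply Rmin_r].
Qed.

Lemma bump_later k j v n :
  slot k = Some (v, n) -> (k < j)%nat -> bump cen rad disp j v = (0, 0).
Proof.
  intros Hk Hj; unfold bump; destruct (slot j) as [[w m] |] eqn:Hsj.
  - rewrite tent_far; [apply pscal_0_l | apply rad_pos |].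
    unfold rad, cen; rewrite Hsj, supn_sym.
    eapply Rle_trans; [apply Rmin_r | eapply sep_before_le; eassumption].
  - unfold disp, disp_of; rewrite Hsj; apply pscal_0_r.
Qed.

Lemma interpolate_slot k v n :
  slot k = Some (v, n) -> dense_in_sq (W n) -> W n (padd v (bumps cen rad disp v)).
Proof.
  intros Hk Hdense.
  assert (Hcen : cen k = v) by (unfold cen; now rewrite Hk).
  set (p := padd v (partial k v)).
  assert (Hbumps : bumps cen rad disp v = padd (partial k v) (disp k)).
  { unfold bumps; rewrite (pseries_finite _ k) by (intros j Hj; eapply bump_later; eassumption).
    cbn [psum]; rewrite <- partial_psum; unfold bump; rewrite Hcen, tent_center.
    f_equal; unfold pscal; destruct (disp k); simpl; f_equal; ring. }
  assert (Hdisp : disp k = psub (nudge (W n) p (step k)) p).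
  { unfold disp, disp_of; now rewrite Hk. }
  assert (Hp : closed_sq p).
  { apply closed_sq_padd; [eapply slot_open; eassumption |].
    rewrite partial_psum; apply psum_bound; intros j.
    apply (bump_bd_dist _ _ _ q); auto using rad_pos, rad_le_bd_dist, disp_le_rad;
      [lra | eapply slot_open; eassumption]. }
  assert (Hw : W n (nudge (W n) p (step k))).
  { apply nudge_in; destruct (Hdense p Hp (step k) (step_pos k)) as [w [Hw Hwp]].
    exists w; split; [assumption |].
    left; eapply Rle_lt_trans; [apply supn_le_dist2 | exact Hwp]. }
  rewrite Hbumps, Hdisp in *; unfold p in *.
  destruct (nudge (W n) (padd v (partial k v)) (step k)) as [w1 w2].
  replace (padd v (padd (partial k v) (psub (w1, w2) (padd v (partial k v))))) with (w1, w2);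
    [assumption | unfold padd, psub; simpl; f_equal; ring].
Qed.

End Interpolation.

Lemma enumerate_disjoint_family (V : nat -> pt -> Prop) :
  (forall n, countable_set (V n)) -> pairwise_disjoint V ->
  exists slot : nat -> option (pt * nat),
    (forall k v n, slot k = Some (v, n) -> V n v) /\
    (forall n v, V n v -> exists k, slot k = Some (v, n)) /\
    (forall j k v n m, slot j = Some (v, n) -> slot k = Some (v, m) -> j = k).
Proof.
  intros Hcount Hdisj.
  set (F n := proj1_sig (constructive_indefinite_description _ (Hcount n))).
  assert (HF : forall n x y, V n x -> V n y -> F n x = F n y -> x = y)
    by (intros n; apply (proj2_sig (constructive_indefinite_description _ (Hcount n)))).
  set (slot k := let '(n, i) := of_nat k in
     match excluded_middle_informative (exists v, V n v /\ F n v = i) with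
     | left H => Some (proj1_sig (constructive_indefinite_description _ H), n)
     | right _ => None
     end).
  assert (Hslot : forall k v n, slot k = Some (v, n) -> V n v /\ k = to_nat (n, F n v)).
  { intros k v n; unfold slot; rewrite <- (cancel_to_of k) at 2.
    destruct (of_nat k) as [n' i].
    destruct excluded_middle_informative as [H | H]; [| discriminate].
    destruct (proj2_sig (constructive_indefinite_description _ H)) as [Hv Hi].
    intros E; injection E; intros <- <-; now rewrite Hi. }
  exists slot; split; [| split].
  - intros k v n Hk; apply (Hslot _ _ _ Hk).
  - intros n v Hv; exists (to_nat (n, F n v)); unfold slot; rewrite cancel_of_to.
    destruct excluded_middle_informative as [H | H]; [| exfalso; apply H; now exists v].
    destruct (proj2_sig (constructive_indefinite_description _ H)) as [Hw Hi].
    do 2 f_equal; now apply (HF n).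
  - intros j k v n m Hj Hk; destruct (Hslot _ _ _ Hj) as [Hvn ->], (Hslot _ _ _ Hk) as [Hvm ->].
    destruct (Nat.eq_dec n m) as [-> | Hnm]; [reflexivity |].
    exfalso; exact (Hdisj n m Hnm v Hvn Hvm).
Qed.

Theorem lemma3p4 (V W : nat -> pt -> Prop) :
  (forall n x, V n x -> open_sq x) ->
  (forall n, countable_set (V n)) ->
  pairwise_disjoint V ->
  (forall n x, W n x -> open_sq x) ->
  pairwise_disjoint W ->
  (forall n, dense_in_sq (V n)) ->
  (forall n, dense_in_sq (W n)) ->
  forall lam eps : R, 1 < lam -> 0 < eps ->
  exists h : pt -> pt,
    lambda_homeo_sq lam h /\
    (forall x, bd_sq x -> h x = x) /\
    (forall x, closed_sq x -> dist2 (h x) x < eps) /\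
    (forall n x, V n x -> W n (h x)).
Proof.
  intros HVopen HVcount HVdisj _ _ _ HWdense lam eps Hlam Heps.
  destruct (enumerate_disjoint_family V HVcount HVdisj) as [slot [Hin [Hcover Hinj]]].
  assert (Hopen : forall k v n, slot k = Some (v, n) -> open_sq v) by eauto.
  set (q := (1 - / lam) / 2).
  assert (Hq : 0 < q <= 1).
  { pose proof (Rinv_1_lt_contravar 1 lam (Rle_refl 1) Hlam); rewrite Rinv_1 in *.
    pose proof (Rinv_0_lt_compat lam ltac:(lra)); unfold q; lra. }
  assert (He : 0 < eps / 4) by lra.
  set (g := bumps (cen slot) (rad slot) (disp slot W q (eps / 4))).
  assert (Hr := rad_pos slot Hopen Hinj).
  assert (Hrd := rad_le_bd_dist slot).
  assert (Hdr := disp_le_rad slot W q (eps / 4) Hopen Hinj Hq He).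
  assert (Hde := disp_le_e slot W q (eps / 4) Hopen Hinj Hq He).
  assert (Hout : forall x, ~ open_sq x -> g x = (0, 0)) by (intros; now apply bumps_out).
  exists (fun x => padd x (g x)); split; [| split; [| split]].
  - apply (perturbation_lambda_homeo g q); [assumption | lra | unfold q; lra | | assumption |].
    + intros x y; apply (bumps_supn _ _ _ q (eps / 4)); auto.
    + intros x Hx; apply (bumps_bd_dist _ _ _ q); auto; lra.
  - intros x [_ Hx]; rewrite Hout by assumption; destruct x; unfold padd; simpl; f_equal; ring.
  - intros x _; eapply Rle_lt_trans; [apply dist2_le_2supn |].
    replace (supn (padd x (g x)) x) with (nrm (g x))
      by (unfold supn; f_equal; destruct (g x), x; unfold psub, padd; simpl; f_equal; ring).
    assert (nrm (g x) <= eps / 4) by apply (bumps_small _ _ _ _ Hr Hde); lra.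
  - intros n x Hx; destruct (Hcover n x Hx) as [k Hk].
    eapply interpolate_slot; eauto.
Qed.
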